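(* Let $\mathcal L$ be an expansion of the language $\langle +,<,0\rangle$ of ordered groups and let $G$ be an $\mathcal L$-structure whose reduct is a densely ordered abelian group. Then $G$ is definably complete if and only if $G$ satisfies the scheme DCI.
   Context: A subset of $G$ is definable if it is defined by an $\mathcal L$-formula with parameters from $G$. A Dedekind cut is a nonempty downward closed subset $C\subseteq G$; a gap is a cut $C\neq G$ with no least upper bound in $G$. $G$ is definably complete if it has no definable gap. For an $\mathcal L$-formula $\varphi(v,\bar w)$, $\mathrm{DCI}_\varphi$ is the sentence $\forall\bar w\Big(\big(\exists s\,\forall v<s\,\varphi(v,\bar w)\ \wedge\ \forall v\big(\forall s<v\,\varphi(s,\bar w)\to\exists u>v\,\forall s<u\,\varphi(s,\bar w)\big)\big)\to\forall v\,\varphi(v,\bar w)\Big)$, and DCI is the scheme $\{\mathrm{DCI}_\varphi:\varphi(v,\bar w)\text{ an }\mathcal L\text{-formula}\}$. *)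

From Stdlib Require Import Arith Fin.

Set Implicit Arguments.

(* An expansion L of the language <+,<,0> of ordered groups: the symbols
   +, <, 0 are built into the syntax below; L supplies the extra symbols. *)
Record language := {
  funs : Type;            (* extra function symbols (constants = arity 0) *)
  fun_ar : funs -> nat;
  rels : Type;
  rel_ar : rels -> nat
}.

Section Syntax.
Variable L : language.

Inductive term : Type :=
| tVar : nat -> term
| tZero : term
| tAdd : term -> term -> term
| tFun : forall f : funs L, (Fin.t (fun_ar L f) -> term) -> term.

Inductive formula : Type :=
| fEq : term -> term -> formula
| fLt : term -> term -> formula
| fRel : forall r : rels L, (Fin.t (rel_ar L r) -> term) -> formula
| fFalse : formula
| fNot : formula -> formula
| fAnd : formula -> formula -> formula
| fOr : formula -> formula -> formula
| fImp : formula -> formula -> formula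
| fEx : nat -> formula -> formula
| fAll : nat -> formula -> formula.
End Syntax.

Record structure (L : language) := {
  carrier :> Type;
  s_add : carrier -> carrier -> carrier;
  s_zero : carrier;
  s_lt : carrier -> carrier -> Prop;
  s_fun : forall f : funs L, (Fin.t (fun_ar L f) -> carrier) -> carrier;
  s_rel : forall r : rels L, (Fin.t (rel_ar L r) -> carrier) -> Prop
}.

Section Semantics.
Variable L : language.
Variable G : structure L.

Definition assignment := nat -> carrier G.

Definition upd (a : assignment) (v : nat) (x : carrier G) : assignment :=
  fun k => if Nat.eqb k v then x else a k.

Fixpoint eval (a : assignment) (t : term L) : carrier G :=
  match t with
  | tVar _ n => a n
  | tZero _ => s_zero G
  | tAdd t1 t2 => s_add G (eval a t1) (eval a t2)
  | tFun f ts => s_fun G f (fun i => eval a (ts i))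
  end.

Fixpoint sat (a : assignment) (phi : formula L) : Prop :=
  match phi with
  | fEq t1 t2 => eval a t1 = eval a t2
  | fLt t1 t2 => s_lt G (eval a t1) (eval a t2)
  | fRel r ts => s_rel G r (fun i => eval a (ts i))
  | fFalse _ => False
  | fNot p => ~ sat a p
  | fAnd p q => sat a p /\ sat a q
  | fOr p q => sat a p \/ sat a q
  | fImp p q => sat a p -> sat a q
  | fEx v p => exists x, sat (upd a v x) p
  | fAll v p => forall x, sat (upd a v x) p
  end.

Definition is_doag : Prop :=
  let add := s_add G in let lt := s_lt G in let z := s_zero G in
  (forall x y w, add x (add y w) = add (add x y) w) /\
  (forall x y, add x y = add y x) /\
  (forall x, add x z = x) /\
  (forall x, exists y, add x y = z) /\
  (forall x, ~ lt x x) /\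
  (forall x y w, lt x y -> lt y w -> lt x w) /\
  (forall x y, lt x y \/ x = y \/ lt y x) /\
  (forall x y w, lt x y -> lt (add x w) (add y w)) /\
  (forall x y, lt x y -> exists w, lt x w /\ lt w y).

Definition le (x y : carrier G) : Prop := s_lt G x y \/ x = y.

(* Definable subsets: defined by a formula phi(v, w) with parameters from G
   (the parameters are the values the assignment gives to the other
   variables). *)
Definition definable (C : carrier G -> Prop) : Prop :=
  exists (phi : formula L) (v : nat) (a : assignment),
    forall x, C x <-> sat (upd a v x) phi.

Definition is_cut (C : carrier G -> Prop) : Prop :=
  (exists x, C x) /\ (forall x y, C y -> le x y -> C x).

Definition has_lub (C : carrier G -> Prop) : Prop :=
  exists b, (forall x, C x -> le x b) /\
            (forall b', (forall x, C x -> le x b') -> le b b').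

Definition is_gap (C : carrier G -> Prop) : Prop :=
  is_cut C /\ (exists x, ~ C x) /\ ~ has_lub C.

Definition definably_complete : Prop :=
  forall C, definable C -> ~ is_gap C.

(* G |= DCI_phi, where phi = phi(v, w) and w ranges over the remaining
   variables (universally quantified via the assignment a). *)
Definition DCI_holds (phi : formula L) (v : nat) : Prop :=
  forall a : assignment,
    ((exists s, forall y, s_lt G y s -> sat (upd a v y) phi) /\
     (forall x, (forall y, s_lt G y x -> sat (upd a v y) phi) ->
        exists u, s_lt G x u /\ forall y, s_lt G y u -> sat (upd a v y) phi)) ->
    forall x, sat (upd a v x) phi.

Definition satisfies_DCI : Prop :=
  forall (phi : formula L) (v : nat), DCI_holds phi v.

End Semantics.

(* Only the dense linear order of G matters.  If DCI_phi fails,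
   witnessed by a point where phi is false, the set of points x with
   [phi(y)] for all [y < x] is definable, nonempty, bounded, and has no
   least upper bound: its supremum would belong to it, and the inductive step
   of DCI_phi would push past it.  Conversely, a definable gap C has no
   maximum and, by density, contains every x all of whose predecessors lie
   in C; these are exactly the hypotheses of DCI for a formula defining C,
   which then gives C = G. *)

From Stdlib Require Import Arith Lia Fin FunctionalExtensionality Classical.

Set Implicit Arguments.

Fixpoint fin_max (n : nat) : (Fin.t n -> nat) -> nat :=
  match n with
  | 0 => fun _ => 0
  | S m => fun g => Nat.max (g Fin.F1) (fin_max (fun i => g (Fin.FS i)))
  end.

Lemma fin_max_ge n (i : Fin.t n) (g : Fin.t n -> nat) : g i <= fin_max g.
Proof.
  induction i as [|n i IHi]; simpl.
  - lia.
  - specialize (IHi (fun j => g (Fin.FS j))). simpl in IHi. lia.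
Qed.

Section Coincidence.
Variable L : language.

Fixpoint term_bound (t : term L) : nat :=
  match t with
  | tVar _ n => S n
  | tZero _ => 0
  | tAdd t1 t2 => Nat.max (term_bound t1) (term_bound t2)
  | tFun f ts => fin_max (fun i => term_bound (ts i))
  end.

Fixpoint formula_bound (p : formula L) : nat :=
  match p with
  | fEq t1 t2 | fLt t1 t2 => Nat.max (term_bound t1) (term_bound t2)
  | fRel r ts => fin_max (fun i => term_bound (ts i))
  | fFalse _ => 0
  | fNot p => formula_bound p
  | fAnd p q | fOr p q | fImp p q => Nat.max (formula_bound p) (formula_bound q)
  | fEx v p | fAll v p => Nat.max (S v) (formula_bound p)
  end.

Variable G : structure L.

Definition agree_below (N : nat) (a b : assignment G) : Prop :=
  forall k, k < N -> a k = b k.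

Lemma agree_below_le N M (a b : assignment G) :
  M <= N -> agree_below N a b -> agree_below M a b.
Proof. intros HMN H k Hk. apply H. lia. Qed.

Lemma agree_below_upd N (a b : assignment G) v x :
  agree_below N a b -> agree_below N (upd a v x) (upd b v x).
Proof. intros H k Hk. unfold upd. destruct (Nat.eqb k v); auto. Qed.

Lemma eval_agree (t : term L) (a b : assignment G) :
  agree_below (term_bound t) a b -> eval a t = eval b t.
Proof.
  induction t as [n| |t1 IH1 t2 IH2|f ts IH]; intros H; simpl in *.
  - apply H. lia.
  - reflexivity.
  - rewrite IH1, IH2; auto; intros k Hk; apply H; lia.
  - f_equal. apply functional_extensionality. intro i. apply IH.
    eapply agree_below_le; [apply (fin_max_ge i (fun i => term_bound (ts i)))|].
    exact H.
Qed.

Lemma sat_agree (p : formula L) (a b : assignment G) :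
  agree_below (formula_bound p) a b -> (sat a p <-> sat b p).
Proof.
  revert a b.
  induction p as [t1 t2|t1 t2|r ts| |p IH|p IHp q IHq|p IHp q IHq|p IHp q IHq
                 |v p IH|v p IH];
    intros a b H; cbn [sat formula_bound] in *.
  - rewrite !(@eval_agree _ a b); try tauto; intros k Hk; apply H; lia.
  - rewrite !(@eval_agree _ a b); try tauto; intros k Hk; apply H; lia.
  - replace (fun i => eval a (ts i)) with (fun i => eval b (ts i)); [tauto|].
    apply functional_extensionality. intro i. symmetry. apply eval_agree.
    eapply agree_below_le; [apply (fin_max_ge i (fun i => term_bound (ts i)))|].
    exact H.
  - tauto.
  - rewrite (IH a b H). tauto.
  - rewrite (IHp a b), (IHq a b); try tauto; intros k Hk; apply H; lia.
  - rewrite (IHp a b), (IHq a b); try tauto; intros k Hk; apply H; lia.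
  - rewrite (IHp a b), (IHq a b); try tauto; intros k Hk; apply H; lia.
  - assert (Hx : forall x, sat (upd a v x) p <-> sat (upd b v x) p).
    { intro x. apply IH, agree_below_upd. intros k Hk; apply H; lia. }
    split; intros [x Hsat]; exists x; apply Hx; exact Hsat.
  - assert (Hx : forall x, sat (upd a v x) p <-> sat (upd b v x) p).
    { intro x. apply IH, agree_below_upd. intros k Hk; apply H; lia. }
    split; intros Hsat x; apply Hx; apply Hsat.
Qed.

Lemma sat_upd_fresh (p : formula L) (a : assignment G) w x :
  formula_bound p <= w -> (sat (upd a w x) p <-> sat a p).
Proof.
  intros Hw. apply sat_agree. intros k Hk. unfold upd.
  replace (Nat.eqb k w) with false by (symmetry; apply Nat.eqb_neq; lia).
  reflexivity.
Qed.

(* The new parameter [x] is stored in a variable [w] that occurs nowhere in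
   [phi], so that the quantified copy of [v] cannot capture it. *)
Lemma definable_all_lt (P : carrier G -> Prop) :
  definable G P -> definable G (fun x => forall y, s_lt G y x -> P y).
Proof.
  intros (phi & v & a & HP).
  set (w := Nat.max (S v) (formula_bound phi)).
  assert (Hwv : Nat.eqb v w = false) by (apply Nat.eqb_neq; unfold w; lia).
  assert (Hwv' : Nat.eqb w v = false) by (apply Nat.eqb_neq; unfold w; lia).
  exists (fAll v (fImp (fLt (tVar L v) (tVar L w)) phi)), w, a.
  intro x. cbn [sat eval].
  assert (Hswap : forall y, upd (upd a w x) v y = upd (upd a v y) w x).
  { intro y. apply functional_extensionality. intro k. unfold upd.
    destruct (Nat.eqb k v) eqn:Ekv, (Nat.eqb k w) eqn:Ekw; auto.
    apply Nat.eqb_eq in Ekv, Ekw. apply Nat.eqb_neq in Hwv. congruence. }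
  assert (Hv : forall y, upd (upd a w x) v y v = y)
    by (intro; unfold upd; rewrite Nat.eqb_refl; auto).
  assert (Hw : forall y, upd (upd a w x) v y w = x)
    by (intro; unfold upd; rewrite Hwv', Nat.eqb_refl; auto).
  assert (Hphi : forall y, sat (upd (upd a w x) v y) phi <-> P y).
  { intro y. rewrite Hswap, sat_upd_fresh by (unfold w; lia). symmetry. apply HP. }
  split; intros H y; specialize (H y); rewrite ?Hv, ?Hw, ?Hphi in *; exact H.
Qed.
End Coincidence.

Section LinearOrder.
Variables (L : language) (G : structure L).
Notation "x < y" := (s_lt G x y).

Hypothesis lt_irrefl : forall x : G, ~ x < x.
Hypothesis lt_trans : forall x y z : G, x < y -> y < z -> x < z.
Hypothesis lt_total : forall x y : G, x < y \/ x = y \/ y < x.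

Lemma le_not_lt (x y : G) : x < y -> ~ le G y x.
Proof. intros Hxy [Hyx|<-]; [apply (lt_irrefl x)|apply (lt_irrefl y)]; eauto. Qed.

Lemma not_le_lt (x y : G) : ~ le G x y -> y < x.
Proof. unfold le. destruct (lt_total x y) as [|[|]]; tauto. Qed.

Lemma is_cut_all_lt (P : G -> Prop) :
  (exists s, forall y, y < s -> P y) -> is_cut G (fun x => forall y, y < x -> P y).
Proof.
  intros Hs. split; [exact Hs|].
  intros x z Hz [Hxz|<-] y Hy; eauto.
Qed.

(* The supremum [b] of C = {x | forall y < x, P y} lies in C: a point
   [y < b] outside P would be an upper bound of C below [b]. *)
Lemma lub_mem_all_lt (P : G -> Prop) (b : G) :
  let C := fun x => forall y, y < x -> P y in
  (forall x, C x -> le G x b) -> (forall b', (forall x, C x -> le G x b') -> le G b b') ->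
  C b.
Proof.
  intros C Hub Hleast y Hyb.
  destruct (classic (P y)) as [|HnP]; [assumption|exfalso].
  apply (le_not_lt Hyb), Hleast. intros x Cx.
  apply NNPP. intros Hxy. exact (HnP (Cx y (not_le_lt Hxy))).
Qed.

Lemma all_of_no_gap_all_lt (P : G -> Prop) :
  ~ is_gap G (fun x => forall y, y < x -> P y) ->
  (exists s, forall y, y < s -> P y) ->
  (forall x, (forall y, y < x -> P y) ->
     exists u, x < u /\ forall y, y < u -> P y) ->
  forall x, P x.
Proof.
  intros Hgap Hs Hstep x0. apply NNPP. intros HnP.
  apply Hgap. split; [|split].
  - apply is_cut_all_lt, Hs.
  - exists x0. intros C0. destruct (Hstep x0 C0) as (u & Hx0u & Cu). auto.
  - intros (b & Hub & Hleast).
    destruct (Hstep b (lub_mem_all_lt P Hub Hleast)) as (u & Hbu & Cu).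
    exact (le_not_lt Hbu (Hub u Cu)).
Qed.

Section Gap.
Variable C : G -> Prop.
Hypotheses (HC_cut : is_cut G C) (HC_nolub : ~ has_lub G C).

Lemma gap_no_max (x : G) : C x -> exists d, C d /\ x < d.
Proof.
  intros Cx. apply NNPP. intros Hno. apply HC_nolub.
  exists x. split; [|intros b' Hb'; apply Hb', Cx].
  intros z Cz. apply NNPP. intros Hzx. eauto using not_le_lt.
Qed.

Hypothesis lt_dense : forall x y : G, x < y -> exists w, x < w /\ w < y.

Lemma gap_mem_of_all_lt (x : G) : (forall y, y < x -> C y) -> C x.
Proof.
  intros Hx. apply NNPP. intros Cx. apply HC_nolub. exists x. split.
  - intros z Cz. apply NNPP. intros Hzx.
    apply Cx, (proj2 HC_cut x z Cz). left. apply not_le_lt, Hzx.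
  - intros b' Hb'. apply NNPP. intros Hxb.
    destruct (lt_dense _ _ (not_le_lt Hxb)) as (w & Hb'w & Hwx).
    exact (le_not_lt Hb'w (Hb' w (Hx w Hwx))).
Qed.
End Gap.
End LinearOrder.

Theorem proposition3p2 (L : language) (G : structure L) :
  is_doag G -> (definably_complete G <-> satisfies_DCI G).
Proof.
  intros (_ & _ & _ & _ & Hirr & Htrans & Htot & _ & Hdense).
  split.
  - intros DC phi v a [Hs Hstep].
    apply (all_of_no_gap_all_lt Hirr Htrans Htot); [|exact Hs|exact Hstep].
    apply DC, definable_all_lt. exists phi, v, a. tauto.
  - intros DCI C (phi & v & a & HC) [Hcut [[x0 Hx0] Hnolub]].
    apply Hx0, HC, (DCI phi v a). split.
    + destruct (proj1 Hcut) as [c Cc]. exists c. intros y Hy. apply HC.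
      apply (proj2 Hcut y c Cc). left. exact Hy.
    + intros x Hx.
      assert (Cx : C x).
      { apply (gap_mem_of_all_lt Hirr Htrans Htot Hcut Hnolub Hdense).
        intros y Hy. apply HC, Hx, Hy. }
      destruct (gap_no_max Htot Hnolub _ Cx) as (d & Cd & Hxd).
      exists d. split; [exact Hxd|]. intros y Hy. apply HC.
      apply (proj2 Hcut y d Cd). left. exact Hy.
Qed.
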